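(* Let $\gamma>0$, $b>0$, $c>0$, $u_{1max}>0$, $u_{2max}>0$, $i_0\in[0,1]$, and let $\beta$ be a bounded nonnegative (measurable) function of time. For a deadline $T>0$, consider minimizing $J(u_1,u_2)=-1+s(T)+\int_0^T (b u_1^2(t)+c u_2^2(t))\,dt$ over Lebesgue integrable $u_1,u_2$ with $0\le u_1(t)\le u_{1max}$, $0\le u_2(t)\le u_{2max}$, subject to $$\dot s = -(\beta+u_2)\, s(1-s-r) - u_1 s,\qquad \dot r=\gamma(1-s-r),\qquad s(0)=1-i_0,\ r(0)=0,\ 0\le s,r\le 1.$$ The optimality system (from Pontryagin's Maximum Principle) consists of these state equations together with the adjoint equations $$\dot\lambda_s = \beta\lambda_s - 2\beta\lambda_s s - \beta\lambda_s r + \lambda_s u_1 + \lambda_s u_2 - 2\lambda_s u_2 s - \lambda_s u_2 r + \gamma\lambda_r,$$ $$\dot\lambda_r = -\beta\lambda_s s + \lambda_s u_2 s + \gamma\lambda_r,$$ with $\lambda_s(T)=-1$, $\lambda_r(T)=0$, and the control characterizations $$u_1=\min\Big\{\max\Big\{\tfrac{\lambda_s s}{-2b},0\Big\},u_{1max}\Big\},\qquad u_2=\min\Big\{\max\Big\{\tfrac{\lambda_s s(1-2s-r)}{-2c},0\Big\},u_{2max}\Big\}$$ (all quantities evaluated at time $t$). Then for a sufficiently small campaign deadline $T$, the state and adjoint trajectories $(s,r,\lambda_s,\lambda_r)$ at the optimum (i.e. the solution of this optimality system) and the optimal controls $(u_1,u_2)$ are unique.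
   Context: Controlled SIR information epidemic: $s,r$ are the fractions of susceptible and recovered individuals (infected fraction $1-s-r$), $\beta(t)$ the effective spreading rate, $\gamma$ the recovery rate, $u_1$ the direct recruitment control, $u_2$ the word-of-mouth control, and $\lambda_s,\lambda_r$ the adjoint variables. *)

From mathcomp Require Import all_boot all_order all_algebra.
From mathcomp Require Import all_classical all_reals all_analysis.
Set Implicit Arguments. Unset Strict Implicit. Unset Printing Implicit Defensive.
Import Order.TTheory GRing.Theory Num.Theory.
Import numFieldNormedType.Exports.
Local Open Scope classical_set_scope.
Local Open Scope ring_scope.

Section SIR.
Variable R : realType.

Definition u1_char (b u1max ls s : R) : R :=
  Num.min (Num.max (ls * s / (- (2 * b))) 0) u1max.
Definition u2_char (c u2max ls s r : R) : R :=
  Num.min (Num.max (ls * s * (1 - 2 * s - r) / (- (2 * c))) 0) u2max.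

Definition rhs_s (beta u1 u2 s r : R) : R :=
  - (beta + u2) * s * (1 - s - r) - u1 * s.
Definition rhs_r (gamma s r : R) : R := gamma * (1 - s - r).
Definition rhs_ls (gamma beta u1 u2 s r ls lr : R) : R :=
  beta * ls - 2 * beta * ls * s - beta * ls * r + ls * u1 + ls * u2
  - 2 * ls * u2 * s - ls * u2 * r + gamma * lr.
Definition rhs_lr (gamma beta u2 s ls lr : R) : R :=
  - beta * ls * s + ls * u2 * s + gamma * lr.

(* Solutions are understood in the
   Caratheodory sense (integral equations with Lebesgue-integrable right-hand
   sides), as beta is only measurable. *)
Definition optimality_system (gamma b c u1max u2max i0 : R) (beta : R -> R)
    (T : R) (s r ls lr : R -> R) : Prop :=
  let U1 := fun t => u1_char b u1max (ls t) (s t) in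
  let U2 := fun t => u2_char c u2max (ls t) (s t) (r t) in
  let Fs := fun t => rhs_s (beta t) (U1 t) (U2 t) (s t) (r t) in
  let Fr := fun t => rhs_r gamma (s t) (r t) in
  let Fls := fun t => rhs_ls gamma (beta t) (U1 t) (U2 t) (s t) (r t) (ls t) (lr t) in
  let Flr := fun t => rhs_lr gamma (beta t) (U2 t) (s t) (ls t) (lr t) in
  [/\ (forall t, 0 <= t <= T -> 0 <= s t <= 1 /\ 0 <= r t <= 1),
      [/\ (lebesgue_measure.-integrable `[0, T] (fun t => (Fs t)%:E)),
      (lebesgue_measure.-integrable `[0, T] (fun t => (Fr t)%:E)),
      (lebesgue_measure.-integrable `[0, T] (fun t => (Fls t)%:E)) &
      (lebesgue_measure.-integrable `[0, T] (fun t => (Flr t)%:E))] &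
      forall t, 0 <= t <= T ->
        [/\ s t = (1 - i0) + \int[lebesgue_measure]_(x in `[0, t]) Fs x,
            r t = 0 + \int[lebesgue_measure]_(x in `[0, t]) Fr x,
            ls t = -1 - \int[lebesgue_measure]_(x in `[t, T]) Fls x &
            lr t = 0 - \int[lebesgue_measure]_(x in `[t, T]) Flr x]].

End SIR.

(* For a short horizon the optimality system is a contraction.  Along any
   solution the states lie in [0,1], so the adjoint right-hand sides grow at
   most linearly in (ls, lr) and the backward integral equations force
   |ls| + |lr| <= 2 once T is small.  On this bounded region the controls
   (clamped polynomials) and all four right-hand sides are Lipschitz with a
   constant L depending only on the data, so the sum D of the distances
   between two solutions satisfies sup D <= 4 L T sup D; for 4 L T <= 1/2
   this forces D = 0. *)

From mathcomp Require Import all_boot all_order all_algebra.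
From mathcomp Require Import all_classical all_reals all_analysis.
From mathcomp Require Import lra ring.
Set Implicit Arguments. Unset Strict Implicit. Unset Printing Implicit Defensive.
Import Order.TTheory GRing.Theory Num.Theory.
Import numFieldNormedType.Exports.
Local Open Scope classical_set_scope.
Local Open Scope ring_scope.

Section LipschitzPairs.
Variable R : realFieldType.
Implicit Types C K d : R.

(* Used with a1, a2 the values of one expression along two solutions at the
   same time, and d the distance between the two solutions at that time. *)
Definition lip_pair C K d (a1 a2 : R) :=
  [/\ `|a1| <= C, `|a2| <= C & `|a1 - a2| <= K * d].

Lemma lip_pair_cst d (k : R) : 0 <= d -> lip_pair `|k| 0 d k k.
Proof. by move=> d0; rewrite /lip_pair subrr normr0 mul0r. Qed.

Lemma lip_pair_of_dist C d (a1 a2 : R) :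
  `|a1| <= C -> `|a2| <= C -> `|a1 - a2| <= d -> lip_pair C 1 d a1 a2.
Proof. by rewrite /lip_pair mul1r. Qed.

Lemma lip_pair_dist_le C K d (L a1 a2 : R) :
  lip_pair C K d a1 a2 -> 0 <= d -> `|K| <= L -> `|a1 - a2| <= L * d.
Proof.
move=> [_ _ h] d0 KL; apply: le_trans h _.
by apply: ler_wpM2r => //; apply: le_trans (ler_norm K) KL.
Qed.

Lemma lip_pairD C1 K1 C2 K2 d (a1 a2 b1 b2 : R) :
  lip_pair C1 K1 d a1 a2 -> lip_pair C2 K2 d b1 b2 ->
  lip_pair (C1 + C2) (K1 + K2) d (a1 + b1) (a2 + b2).
Proof.
move=> [a1C a2C a12] [b1C b2C b12]; split.
- by apply: le_trans (ler_normD _ _) _; lra.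
- by apply: le_trans (ler_normD _ _) _; lra.
- have -> : a1 + b1 - (a2 + b2) = (a1 - a2) + (b1 - b2) by ring.
  by apply: le_trans (ler_normD _ _) _; lra.
Qed.

Lemma lip_pairN C K d (a1 a2 : R) :
  lip_pair C K d a1 a2 -> lip_pair C K d (- a1) (- a2).
Proof. by rewrite /lip_pair -opprD !normrN. Qed.

Lemma lip_pairB C1 K1 C2 K2 d (a1 a2 b1 b2 : R) :
  lip_pair C1 K1 d a1 a2 -> lip_pair C2 K2 d b1 b2 ->
  lip_pair (C1 + C2) (K1 + K2) d (a1 - b1) (a2 - b2).
Proof. by move=> ha hb; apply: lip_pairD => //; apply: lip_pairN. Qed.

Lemma lip_pairM C1 K1 C2 K2 d (a1 a2 b1 b2 : R) : 0 <= d ->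
  lip_pair C1 K1 d a1 a2 -> lip_pair C2 K2 d b1 b2 ->
  lip_pair (C1 * C2) (C1 * K2 + K1 * C2) d (a1 * b1) (a2 * b2).
Proof.
move=> d0 [a1C a2C a12] [b1C b2C b12].
have := normr_ge0 a1; have := normr_ge0 b2; have := normr_ge0 (a1 - a2) => *.
split; rewrite ?normrM; [exact: ler_pM|exact: ler_pM|].
have -> : a1 * b1 - a2 * b2 = a1 * (b1 - b2) + (a1 - a2) * b2 by ring.
apply: le_trans (ler_normD _ _) _; rewrite !normrM.
have : `|a1| * `|b1 - b2| <= C1 * (K2 * d) by apply: ler_pM.
have : `|a1 - a2| * `|b2| <= (K1 * d) * C2 by apply: ler_pM.
lra.
Qed.

Definition clamp (m x : R) := Num.min (Num.max x 0) m.

Lemma clampE (m x : R) : 0 <= m ->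
  clamp m x = if x <= 0 then 0 else if x <= m then x else m.
Proof.
move=> m0; rewrite /clamp /Num.max /Num.min.
case: (ltrP x 0) => x0; case: (lerP x 0) => x0' //; try lra.
- by case: ltrP => // ?; lra.
- have -> : x = 0 by lra.
  by case: ltrP => // ?; lra.
- by case: (ltrP x m) => xm; case: (lerP x m) => xm' //; lra.
Qed.

Lemma clamp_ge0_le (m x : R) : 0 <= m -> 0 <= clamp m x <= m.
Proof.
move=> m0; rewrite clampE //.
by have [?|?] := lerP x 0; have [?|?] := lerP x m; apply/andP; split; lra.
Qed.

Lemma clamp_dist_le (m x y : R) : 0 <= m -> `|clamp m x - clamp m y| <= `|x - y|.
Proof.
move=> m0; rewrite !clampE //.
have [h|h] := lerP 0 (x - y); [rewrite (ger0_norm h)|rewrite (ltr0_norm h)];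
rewrite ler_norml;
have [?|?] := lerP x 0; have [?|?] := lerP y 0;
have [?|?] := lerP x m; have [?|?] := lerP y m; apply/andP; split; lra.
Qed.

Lemma lip_pair_clamp C K d (m x1 x2 : R) : 0 <= m -> lip_pair C K d x1 x2 ->
  lip_pair m K d (clamp m x1) (clamp m x2).
Proof.
move=> m0 [_ _ h]; have /andP[? ?] := clamp_ge0_le x1 m0.
have /andP[? ?] := clamp_ge0_le x2 m0.
by split; [rewrite ger0_norm|rewrite ger0_norm|apply: le_trans (clamp_dist_le x1 x2 m0) h].
Qed.

End LipschitzPairs.

Section IntervalIntegrals.
Variable R : realType.
Notation mu := (@lebesgue_measure R).
Implicit Types (f g : R -> R) (a b k T : R).

Lemma subset_itvcc a b T : 0 <= a -> b <= T -> `[a, b] `<=` `[0, T].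
Proof.
move=> a0 bT x /=; rewrite !in_itv /= => /andP[? ?].
by apply/andP; split; lra.
Qed.

Lemma normr_Rintegral_itv_le f a b k : a <= b -> 0 <= k ->
  mu.-integrable `[a, b] (EFin \o f) ->
  (forall x, a <= x <= b -> `|f x| <= k) ->
  `|\int[mu]_(x in `[a, b]) f x| <= k * (b - a).
Proof.
move=> ab k0 fi fk; apply: le_trans (le_normr_Rintegral _ fi) _ => //.
have /integrableP[mf _] := fi.
have : (\int[mu]_(x in `[a, b]) `|(f x)%:E| <= k%:E * mu `[a, b])%E.
  apply: integral_le_bound => //.
  by apply: aeW => x /= /[!in_itv] /fk; rewrite lee_fin.
rewrite lebesgue_measure_itv /= lte_fin.
rewrite -lee_fin /Rintegral fineK; last exact: integrable_fin_num (integrable_norm fi).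
case: ltP => [_|ba]; first by rewrite -EFinD -EFinM.
by rewrite mule0 (_ : b - a = 0) ?mulr0 //; lra.
Qed.

Lemma normr_Rintegral_subitv_le f a b k T : 0 <= a -> a <= b -> b <= T -> 0 <= k ->
  mu.-integrable `[0, T] (EFin \o f) ->
  (forall x, a <= x <= b -> `|f x| <= k) ->
  `|\int[mu]_(x in `[a, b]) f x| <= k * T.
Proof.
move=> a0 ab bT k0 fi fk.
have fi' : mu.-integrable `[a, b] (EFin \o f).
  by apply: integrableS fi => //; exact: subset_itvcc.
apply: le_trans (normr_Rintegral_itv_le ab k0 fi' fk) _.
by apply: ler_wpM2l => //; lra.
Qed.

Lemma normr_Rintegral_subitv_le_total f a b T : 0 <= a -> a <= b -> b <= T ->
  mu.-integrable `[0, T] (EFin \o f) ->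
  `|\int[mu]_(x in `[a, b]) f x| <= \int[mu]_(x in `[0, T]) `|f x|.
Proof.
move=> a0 ab bT fi.
have fi' : mu.-integrable `[a, b] (EFin \o f).
  by apply: integrableS fi => //; exact: subset_itvcc.
apply: le_trans (le_normr_Rintegral _ fi') _ => //.
have /integrableP[mf _] := integrable_norm fi.
rewrite /Rintegral fine_le //; [exact: integrable_fin_num (integrable_norm fi')
  | exact: integrable_fin_num (integrable_norm fi)|].
by apply: ge0_subset_integral => //=; exact: subset_itvcc.
Qed.

Lemma dist_Rintegral_subitv_le f g a b k T : 0 <= a -> a <= b -> b <= T -> 0 <= k ->
  mu.-integrable `[0, T] (EFin \o f) -> mu.-integrable `[0, T] (EFin \o g) ->
  (forall x, a <= x <= b -> `|f x - g x| <= k) ->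
  `|\int[mu]_(x in `[a, b]) f x - \int[mu]_(x in `[a, b]) g x| <= k * T.
Proof.
move=> a0 ab bT k0 fi gi fgk.
have sub : `[a, b] `<=` `[0, T] := subset_itvcc a0 bT.
rewrite -RintegralB //; [|exact: integrableS fi|exact: integrableS gi].
apply: normr_Rintegral_subitv_le fgk => //.
by apply: eq_integrable (integrableB _ fi gi).
Qed.

End IntervalIntegrals.

(* The a priori bound B makes sup X finite, and then sup X <= a + sup X / 2. *)
Lemma le_twice_of_halving (R : realType) (X : R -> R) (T a B : R) : 0 <= T ->
  (forall t, 0 <= t <= T -> X t <= B) ->
  (forall m, (forall t, 0 <= t <= T -> X t <= m) ->
     forall t, 0 <= t <= T -> X t <= a + m / 2) ->
  forall t, 0 <= t <= T -> X t <= 2 * a.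
Proof.
move=> T0 XB Xhalf.
have t0 : (0 : R) <= 0 <= T by rewrite lexx T0.
pose E := [set X t | t in [set t | 0 <= t <= T]].
have supE : has_sup E by split; [exists (X 0), 0 | exists B => _ [t ? <-]; apply: XB].
have X_sup t : 0 <= t <= T -> X t <= sup E by move=> ?; apply: sup_upper_bound => //; exists t.
have : sup E <= a + sup E / 2.
  by apply: ge_sup => [|_ [t ? <-]]; [exists (X 0), 0 | exact: Xhalf].
by move=> ? t /X_sup; lra.
Qed.

Section ForwardBackward.
Variable R : realType.
Notation mu := (@lebesgue_measure R).

Definition dist4 (s1 r1 l1 m1 s2 r2 l2 m2 : R) :=
  `|s1 - s2| + `|r1 - r2| + `|l1 - l2| + `|m1 - m2|.

Lemma dist4_ge0 (s1 r1 l1 m1 s2 r2 l2 m2 : R) : 0 <= dist4 s1 r1 l1 m1 s2 r2 l2 m2.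
Proof. by rewrite /dist4 !addr_ge0. Qed.

Lemma dist4_le0 (s1 r1 l1 m1 s2 r2 l2 m2 : R) :
  dist4 s1 r1 l1 m1 s2 r2 l2 m2 <= 0 -> [/\ s1 = s2, r1 = r2, l1 = l2 & m1 = m2].
Proof.
rewrite /dist4 => D0.
have eq_of_dist (x y : R) : `|x - y| <= 0 -> x = y by rewrite normr_le0 subr_eq0 => /eqP.
have := normr_ge0 (s1 - s2); have := normr_ge0 (r1 - r2).
have := normr_ge0 (l1 - l2); have := normr_ge0 (m1 - m2).
by split; apply: eq_of_dist; lra.
Qed.

Lemma backward_integral_bound (T K cl cm : R) (l m Fl Fm : R -> R) :
  0 < T -> 0 <= K -> 2 * K * T <= 1/2 ->
  mu.-integrable `[0, T] (EFin \o Fl) -> mu.-integrable `[0, T] (EFin \o Fm) ->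
  (forall x, 0 <= x <= T -> `|Fl x| <= K * (`|l x| + `|m x|)) ->
  (forall x, 0 <= x <= T -> `|Fm x| <= K * (`|l x| + `|m x|)) ->
  (forall t, 0 <= t <= T -> l t = cl - \int[mu]_(x in `[t, T]) Fl x /\
                            m t = cm - \int[mu]_(x in `[t, T]) Fm x) ->
  forall t, 0 <= t <= T -> `|l t| + `|m t| <= 2 * (`|cl| + `|cm|).
Proof.
move=> T0 K0 KT Fli Fmi Flb Fmb lm_eq.
have lm_le t : 0 <= t <= T -> `|l t| + `|m t| <=
    `|cl| + `|cm| + `|\int[mu]_(x in `[t, T]) Fl x| + `|\int[mu]_(x in `[t, T]) Fm x|.
  move=> /lm_eq[-> ->]; have := ler_normB cl (\int[mu]_(x in `[t, T]) Fl x).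
  have := ler_normB cm (\int[mu]_(x in `[t, T]) Fm x); lra.
apply: (le_twice_of_halving (B := `|cl| + `|cm| + \int[mu]_(x in `[0, T]) `|Fl x|
                                   + \int[mu]_(x in `[0, T]) `|Fm x|)); first lra.
- move=> t tT; apply: le_trans (lm_le t tT) _; case/andP: tT => t0 tT.
  have := normr_Rintegral_subitv_le_total t0 tT (lexx T) Fli.
  have := normr_Rintegral_subitv_le_total t0 tT (lexx T) Fmi; lra.
- move=> M lmM t tT; apply: le_trans (lm_le t tT) _; case/andP: (tT) => t0 tT_le.
  have M0 : 0 <= M.
    apply: le_trans (lmM 0 _); last by rewrite lexx ltW.
    by rewrite addr_ge0.
  have F_le (F : R -> R) : (forall x, 0 <= x <= T -> `|F x| <= K * (`|l x| + `|m x|)) ->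
      mu.-integrable `[0, T] (EFin \o F) ->
      `|\int[mu]_(x in `[t, T]) F x| <= K * M * T.
    move=> FK Fi; apply: normr_Rintegral_subitv_le Fi _ => //; first exact: mulr_ge0.
    move=> x /andP[tx xT]; have xT0 : 0 <= x <= T by apply/andP; split; lra.
    by apply: le_trans (FK x xT0) _; apply: ler_wpM2l => //; apply: lmM.
  have := F_le _ Flb Fli; have := F_le _ Fmb Fmi.
  have : K * M * T * 2 <= M / 2 by nra.
  lra.
Qed.

Lemma forward_integral_dist_le (T k c t : R) (x1 x2 F1 F2 : R -> R) :
  0 <= t <= T -> 0 <= k ->
  mu.-integrable `[0, T] (EFin \o F1) -> mu.-integrable `[0, T] (EFin \o F2) ->
  (forall x, 0 <= x <= T -> `|F1 x - F2 x| <= k) ->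
  x1 t = c + \int[mu]_(x in `[0, t]) F1 x ->
  x2 t = c + \int[mu]_(x in `[0, t]) F2 x ->
  `|x1 t - x2 t| <= k * T.
Proof.
move=> /andP[t0 tT] k0 F1i F2i Fk -> ->; rewrite opprD addrACA subrr add0r.
apply: dist_Rintegral_subitv_le F1i F2i _ => // x /andP[? ?].
by apply: Fk; apply/andP; split; lra.
Qed.

Lemma backward_integral_dist_le (T k c t : R) (x1 x2 F1 F2 : R -> R) :
  0 <= t <= T -> 0 <= k ->
  mu.-integrable `[0, T] (EFin \o F1) -> mu.-integrable `[0, T] (EFin \o F2) ->
  (forall x, 0 <= x <= T -> `|F1 x - F2 x| <= k) ->
  x1 t = c - \int[mu]_(x in `[t, T]) F1 x ->
  x2 t = c - \int[mu]_(x in `[t, T]) F2 x ->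
  `|x1 t - x2 t| <= k * T.
Proof.
move=> /andP[t0 tT] k0 F1i F2i Fk -> ->; rewrite opprD opprK addrACA subrr add0r.
rewrite addrC distrC; apply: dist_Rintegral_subitv_le F1i F2i _ => // x /andP[? ?].
by apply: Fk; apply/andP; split; lra.
Qed.

Lemma forward_backward_unique (T L B cs cr cl cm : R)
    (s1 r1 l1 m1 s2 r2 l2 m2 Fs1 Fr1 Fl1 Fm1 Fs2 Fr2 Fl2 Fm2 : R -> R) :
  let D x := dist4 (s1 x) (r1 x) (l1 x) (m1 x) (s2 x) (r2 x) (l2 x) (m2 x) in
  0 < T -> 0 <= L -> 4 * L * T <= 1/2 ->
  [/\ mu.-integrable `[0, T] (EFin \o Fs1), mu.-integrable `[0, T] (EFin \o Fs2),
      mu.-integrable `[0, T] (EFin \o Fr1) & mu.-integrable `[0, T] (EFin \o Fr2)] ->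
  [/\ mu.-integrable `[0, T] (EFin \o Fl1), mu.-integrable `[0, T] (EFin \o Fl2),
      mu.-integrable `[0, T] (EFin \o Fm1) & mu.-integrable `[0, T] (EFin \o Fm2)] ->
  (forall t, 0 <= t <= T -> D t <= B) ->
  (forall x, 0 <= x <= T ->
     [/\ `|Fs1 x - Fs2 x| <= L * D x, `|Fr1 x - Fr2 x| <= L * D x,
         `|Fl1 x - Fl2 x| <= L * D x & `|Fm1 x - Fm2 x| <= L * D x]) ->
  (forall t, 0 <= t <= T ->
     [/\ s1 t = cs + \int[mu]_(x in `[0, t]) Fs1 x, s2 t = cs + \int[mu]_(x in `[0, t]) Fs2 x,
         r1 t = cr + \int[mu]_(x in `[0, t]) Fr1 x &
         r2 t = cr + \int[mu]_(x in `[0, t]) Fr2 x]) ->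
  (forall t, 0 <= t <= T ->
     [/\ l1 t = cl - \int[mu]_(x in `[t, T]) Fl1 x, l2 t = cl - \int[mu]_(x in `[t, T]) Fl2 x,
         m1 t = cm - \int[mu]_(x in `[t, T]) Fm1 x &
         m2 t = cm - \int[mu]_(x in `[t, T]) Fm2 x]) ->
  forall t, 0 <= t <= T -> [/\ s1 t = s2 t, r1 t = r2 t, l1 t = l2 t & m1 t = m2 t].
Proof.
move=> D T0 L0 LT [Fs1i Fs2i Fr1i Fr2i] [Fl1i Fl2i Fm1i Fm2i] DB FL fwd bwd.
suff D_le0 t : 0 <= t <= T -> D t <= 2 * 0 by move=> t /D_le0; rewrite mulr0 => /dist4_le0.
apply: (le_twice_of_halving (B := B)) => [|//|M DM {}t tT]; first exact: ltW.
have M0 : 0 <= M by apply: le_trans (dist4_ge0 _ _ _ _ _ _ _ _) (DM 0 _); rewrite lexx ltW.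
have LM0 : 0 <= L * M by apply: mulr_ge0.
have LD x : 0 <= x <= T -> L * D x <= L * M by move=> xT; apply: ler_wpM2l => //; apply: DM.
have FsL x xT := le_trans (let: And4 h _ _ _ := FL x xT in h) (LD x xT).
have FrL x xT := le_trans (let: And4 _ h _ _ := FL x xT in h) (LD x xT).
have FlL x xT := le_trans (let: And4 _ _ h _ := FL x xT in h) (LD x xT).
have FmL x xT := le_trans (let: And4 _ _ _ h := FL x xT in h) (LD x xT).
have [es1 es2 er1 er2] := fwd t tT; have [el1 el2 em1 em2] := bwd t tT.
have := forward_integral_dist_le tT LM0 Fs1i Fs2i FsL es1 es2.
have := forward_integral_dist_le tT LM0 Fr1i Fr2i FrL er1 er2.
have := backward_integral_dist_le tT LM0 Fl1i Fl2i FlL el1 el2.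
have := backward_integral_dist_le tT LM0 Fm1i Fm2i FmL em1 em2.
have : 4 * (L * M * T) <= M / 2 by nra.
rewrite /D /dist4; lra.
Qed.

End ForwardBackward.

Section SIRRightHandSides.
Variable R : realType.

(* The bound C and the Lipschitz constant K of an expression are left as
   evars and computed by following its syntax. *)
Ltac solve_lip_pair d0 :=
  repeat first [ eassumption | apply: lip_pairD | apply: lip_pairB
               | apply: (lip_pairM d0) | apply: lip_pairN | exact: (lip_pair_cst _ d0) ].

Lemma u1_char_lip (b u1max : R) : 0 <= u1max -> exists K : R,
  forall d l1 l2 s1 s2 : R, 0 <= d -> lip_pair 2 1 d l1 l2 -> lip_pair 1 1 d s1 s2 ->
  lip_pair u1max K d (u1_char b u1max l1 s1) (u1_char b u1max l2 s2).
Proof.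
move=> u0; eexists => d l1 l2 s1 s2 d0 hl hs.
by apply: (lip_pair_clamp u0); solve_lip_pair d0.
Qed.

Lemma u2_char_lip (c u2max : R) : 0 <= u2max -> exists K : R,
  forall d l1 l2 s1 s2 r1 r2 : R, 0 <= d ->
  lip_pair 2 1 d l1 l2 -> lip_pair 1 1 d s1 s2 -> lip_pair 1 1 d r1 r2 ->
  lip_pair u2max K d (u2_char c u2max l1 s1 r1) (u2_char c u2max l2 s2 r2).
Proof.
move=> u0; eexists => d l1 l2 s1 s2 r1 r2 d0 hl hs hr.
by apply: (lip_pair_clamp u0); solve_lip_pair d0.
Qed.

Lemma rhs_s_lip (M U1 K1 U2 K2 : R) : exists C K : R,
  forall d beta u11 u12 u21 u22 s1 s2 r1 r2 : R, 0 <= d ->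
  lip_pair M 0 d beta beta -> lip_pair U1 K1 d u11 u12 -> lip_pair U2 K2 d u21 u22 ->
  lip_pair 1 1 d s1 s2 -> lip_pair 1 1 d r1 r2 ->
  lip_pair C K d (rhs_s beta u11 u21 s1 r1) (rhs_s beta u12 u22 s2 r2).
Proof.
eexists; eexists => d beta u11 u12 u21 u22 s1 s2 r1 r2 d0 *.
by rewrite /rhs_s; solve_lip_pair d0.
Qed.

Lemma rhs_r_lip (gamma : R) : exists C K : R,
  forall d s1 s2 r1 r2 : R, 0 <= d -> lip_pair 1 1 d s1 s2 -> lip_pair 1 1 d r1 r2 ->
  lip_pair C K d (rhs_r gamma s1 r1) (rhs_r gamma s2 r2).
Proof.
eexists; eexists => d s1 s2 r1 r2 d0 *.
by rewrite /rhs_r; solve_lip_pair d0.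
Qed.

Lemma rhs_ls_lip (gamma M U1 K1 U2 K2 : R) : exists C K : R,
  forall d beta u11 u12 u21 u22 s1 s2 r1 r2 l1 l2 m1 m2 : R, 0 <= d ->
  lip_pair M 0 d beta beta -> lip_pair U1 K1 d u11 u12 -> lip_pair U2 K2 d u21 u22 ->
  lip_pair 1 1 d s1 s2 -> lip_pair 1 1 d r1 r2 ->
  lip_pair 2 1 d l1 l2 -> lip_pair 2 1 d m1 m2 ->
  lip_pair C K d (rhs_ls gamma beta u11 u21 s1 r1 l1 m1)
                 (rhs_ls gamma beta u12 u22 s2 r2 l2 m2).
Proof.
eexists; eexists => d beta u11 u12 u21 u22 s1 s2 r1 r2 l1 l2 m1 m2 d0 *.
by rewrite /rhs_ls; solve_lip_pair d0.
Qed.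

Lemma rhs_lr_lip (gamma M U2 K2 : R) : exists C K : R,
  forall d beta u21 u22 s1 s2 l1 l2 m1 m2 : R, 0 <= d ->
  lip_pair M 0 d beta beta -> lip_pair U2 K2 d u21 u22 ->
  lip_pair 1 1 d s1 s2 -> lip_pair 2 1 d l1 l2 -> lip_pair 2 1 d m1 m2 ->
  lip_pair C K d (rhs_lr gamma beta u21 s1 l1 m1) (rhs_lr gamma beta u22 s2 l2 m2).
Proof.
eexists; eexists => d beta u21 u22 s1 s2 l1 l2 m1 m2 d0 *.
by rewrite /rhs_lr; solve_lip_pair d0.
Qed.

Lemma rhs_ls_linear_growth (gamma beta u1 u2 s r ls lr M U1 U2 : R) :
  0 <= beta <= M -> 0 <= u1 <= U1 -> 0 <= u2 <= U2 -> 0 <= s <= 1 -> 0 <= r <= 1 ->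
  `|rhs_ls gamma beta u1 u2 s r ls lr|
    <= (4 * M + U1 + 4 * U2 + `|gamma|) * (`|ls| + `|lr|).
Proof.
move=> /andP[? ?] /andP[? ?] /andP[? ?] /andP[? ?] /andP[? ?].
pose A := beta * (1 - 2 * s - r) + u1 + u2 * (1 - 2 * s - r).
have A_le : `|A| <= 4 * M + U1 + 4 * U2 by rewrite ler_norml /A; apply/andP; split; nra.
have -> : rhs_ls gamma beta u1 u2 s r ls lr = ls * A + gamma * lr by rewrite /rhs_ls /A; ring.
apply: le_trans (ler_normD _ _) _; rewrite !normrM.
have := ler_wpM2l (normr_ge0 ls) A_le.
have := normr_ge0 ls; have := normr_ge0 lr; have := normr_ge0 gamma; nra.
Qed.

Lemma rhs_lr_linear_growth (gamma beta u2 s ls lr M U1 U2 : R) :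
  0 <= U1 -> 0 <= beta <= M -> 0 <= u2 <= U2 -> 0 <= s <= 1 ->
  `|rhs_lr gamma beta u2 s ls lr| <= (4 * M + U1 + 4 * U2 + `|gamma|) * (`|ls| + `|lr|).
Proof.
move=> ? /andP[? ?] /andP[? ?] /andP[? ?].
pose A := - beta * s + u2 * s.
have A_le : `|A| <= 4 * M + U1 + 4 * U2 by rewrite ler_norml /A; apply/andP; split; nra.
have -> : rhs_lr gamma beta u2 s ls lr = ls * A + gamma * lr by rewrite /rhs_lr /A; ring.
apply: le_trans (ler_normD _ _) _; rewrite !normrM.
have := ler_wpM2l (normr_ge0 ls) A_le.
have := normr_ge0 ls; have := normr_ge0 lr; have := normr_ge0 gamma; nra.
Qed.

End SIRRightHandSides.

Section SIRUniqueness.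
Variables (R : realType) (gamma b c u1max u2max M : R).
Hypotheses (u1max_ge0 : 0 <= u1max) (u2max_ge0 : 0 <= u2max).

Definition rhs_lipschitz (L : R) := forall beta s1 r1 l1 m1 s2 r2 l2 m2 : R,
  0 <= beta <= M -> 0 <= s1 <= 1 -> 0 <= r1 <= 1 -> `|l1| + `|m1| <= 2 ->
  0 <= s2 <= 1 -> 0 <= r2 <= 1 -> `|l2| + `|m2| <= 2 ->
  let D := dist4 s1 r1 l1 m1 s2 r2 l2 m2 in
  let u1 l s := u1_char b u1max l s in
  let u2 l s r := u2_char c u2max l s r in
  [/\ `|rhs_s beta (u1 l1 s1) (u2 l1 s1 r1) s1 r1
        - rhs_s beta (u1 l2 s2) (u2 l2 s2 r2) s2 r2| <= L * D,
      `|rhs_r gamma s1 r1 - rhs_r gamma s2 r2| <= L * D,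
      `|rhs_ls gamma beta (u1 l1 s1) (u2 l1 s1 r1) s1 r1 l1 m1
        - rhs_ls gamma beta (u1 l2 s2) (u2 l2 s2 r2) s2 r2 l2 m2| <= L * D &
      `|rhs_lr gamma beta (u2 l1 s1 r1) s1 l1 m1
        - rhs_lr gamma beta (u2 l2 s2 r2) s2 l2 m2| <= L * D].

Lemma exists_rhs_lipschitz : exists2 L : R, 0 <= L & rhs_lipschitz L.
Proof.
have [Ku1 u1L] := u1_char_lip b u1max_ge0.
have [Ku2 u2L] := u2_char_lip c u2max_ge0.
have [Cs [Ks sL]] := rhs_s_lip M u1max Ku1 u2max Ku2.
have [Cr [Kr rL]] := rhs_r_lip gamma.
have [Cl [Kl lL]] := rhs_ls_lip gamma M u1max Ku1 u2max Ku2.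
have [Cm [Km mL]] := rhs_lr_lip gamma M u2max Ku2.
exists (`|Ks| + `|Kr| + `|Kl| + `|Km|); first by rewrite !addr_ge0.
move=> beta s1 r1 l1 m1 s2 r2 l2 m2 /andP[b0 bM] s1b r1b l1b s2b r2b l2b D u1 u2.
rewrite {}/u1 {}/u2.
have D0 : 0 <= D := dist4_ge0 _ _ _ _ _ _ _ _.
have := normr_ge0 (s1 - s2); have := normr_ge0 (r1 - r2).
have := normr_ge0 (l1 - l2); have := normr_ge0 (m1 - m2).
have := normr_ge0 l1; have := normr_ge0 l2; have := normr_ge0 m1; have := normr_ge0 m2 => *.
have unit_pair (x y : R) : 0 <= x <= 1 -> 0 <= y <= 1 -> `|x - y| <= D -> lip_pair 1 1 D x y.
  by move=> /andP[? ?] /andP[? ?]; apply: lip_pair_of_dist; rewrite ger0_norm.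
have hs : lip_pair 1 1 D s1 s2 by apply: unit_pair => //; rewrite /D /dist4; lra.
have hr : lip_pair 1 1 D r1 r2 by apply: unit_pair => //; rewrite /D /dist4; lra.
have hl : lip_pair 2 1 D l1 l2 by apply: lip_pair_of_dist; rewrite /D /dist4; lra.
have hm : lip_pair 2 1 D m1 m2 by apply: lip_pair_of_dist; rewrite /D /dist4; lra.
have hb : lip_pair M 0 D beta beta by split; rewrite ?subrr ?normr0 ?mul0r ?ger0_norm.
have hu1 := u1L D _ _ _ _ D0 hl hs; have hu2 := u2L D _ _ _ _ _ _ D0 hl hs hr.
have := normr_ge0 Ks; have := normr_ge0 Kr; have := normr_ge0 Kl; have := normr_ge0 Km => *.
split; [ have := lip_pair_dist_le (sL _ _ _ _ _ _ _ _ _ _ D0 hb hu1 hu2 hs hr) D0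
       | have := lip_pair_dist_le (rL _ _ _ _ _ D0 hs hr) D0
       | have := lip_pair_dist_le (lL _ _ _ _ _ _ _ _ _ _ _ _ _ _ D0 hb hu1 hu2 hs hr hl hm) D0
       | have := lip_pair_dist_le (mL _ _ _ _ _ _ _ _ _ _ D0 hb hu2 hs hl hm) D0 ];
  apply; lra.
Qed.

Definition adjoint_growth := 4 * M + u1max + 4 * u2max + `|gamma|.

Lemma adjoint_growth_ge0 : 0 <= M -> 0 <= adjoint_growth.
Proof. by move=> M0; rewrite /adjoint_growth !addr_ge0 ?mulr_ge0. Qed.

Lemma optimality_adjoint_bound (i0 T : R) (beta s r ls lr : R -> R) :
  (forall t, 0 <= beta t <= M) -> 0 < T -> 2 * adjoint_growth * T <= 1/2 ->
  optimality_system gamma b c u1max u2max i0 beta T s r ls lr ->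
  forall t, 0 <= t <= T -> `|ls t| + `|lr t| <= 2.
Proof.
move=> beta_bnd T0 KT [sr [_ _ Fli Fmi] eqs].
have K0 : 0 <= adjoint_growth.
  by apply: adjoint_growth_ge0; have /andP[] := beta_bnd 0; apply: le_trans.
have := backward_integral_bound (cl := -1) (cm := 0) T0 K0 KT Fli Fmi.
rewrite normrN normr1 normr0 addr0 mulr1; apply.
- move=> x xT; have [? ?] := sr x xT.
  by apply: rhs_ls_linear_growth => //; apply: clamp_ge0_le.
- move=> x xT; have [? ?] := sr x xT.
  by apply: rhs_lr_linear_growth => //; apply: clamp_ge0_le.
- by move=> t tT; have [_ _ ? ?] := eqs t tT.
Qed.

Lemma dist4_le_of_bounds (s1 r1 l1 m1 s2 r2 l2 m2 : R) :
  0 <= s1 <= 1 -> 0 <= r1 <= 1 -> `|l1| + `|m1| <= 2 ->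
  0 <= s2 <= 1 -> 0 <= r2 <= 1 -> `|l2| + `|m2| <= 2 ->
  dist4 s1 r1 l1 m1 s2 r2 l2 m2 <= 6.
Proof.
move=> s1b r1b lm1 s2b r2b lm2.
have unit_dist (x y : R) : 0 <= x <= 1 -> 0 <= y <= 1 -> `|x - y| <= 1.
  by move=> /andP[? ?] /andP[? ?]; rewrite ler_norml; apply/andP; split; lra.
have := unit_dist _ _ s1b s2b; have := unit_dist _ _ r1b r2b.
have := ler_normB l1 l2; have := ler_normB m1 m2; rewrite /dist4; lra.
Qed.

Lemma optimality_system_unique (L i0 T : R) (beta s1 r1 ls1 lr1 s2 r2 ls2 lr2 : R -> R) :
  (forall t, 0 <= beta t <= M) -> 0 < T -> 0 <= L -> rhs_lipschitz L ->
  2 * adjoint_growth * T <= 1/2 -> 4 * L * T <= 1/2 ->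
  optimality_system gamma b c u1max u2max i0 beta T s1 r1 ls1 lr1 ->
  optimality_system gamma b c u1max u2max i0 beta T s2 r2 ls2 lr2 ->
  forall t, 0 <= t <= T -> [/\ s1 t = s2 t, r1 t = r2 t, ls1 t = ls2 t & lr1 t = lr2 t].
Proof.
move=> beta_bnd T0 L0 hL KT LT o1 o2.
have ab1 := optimality_adjoint_bound beta_bnd T0 KT o1.
have ab2 := optimality_adjoint_bound beta_bnd T0 KT o2.
case: o1 o2 => [sr1 [Fs1i Fr1i Fl1i Fm1i] eq1] [sr2 [Fs2i Fr2i Fl2i Fm2i] eq2].
apply: (forward_backward_unique (B := 6) (cs := 1 - i0) (cr := 0) (cl := -1) (cm := 0) T0 L0 LT
  (And4 Fs1i Fs2i Fr1i Fr2i) (And4 Fl1i Fl2i Fm1i Fm2i)).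
- move=> t tT; have [? ?] := sr1 t tT; have [? ?] := sr2 t tT.
  by apply: dist4_le_of_bounds; rewrite ?ab1 ?ab2.
- move=> x xT; have [? ?] := sr1 x xT; have [? ?] := sr2 x xT.
  by apply: hL; rewrite ?ab1 ?ab2.
- by move=> t tT; have [? ? _ _] := eq1 t tT; have [? ? _ _] := eq2 t tT; split.
- by move=> t tT; have [_ _ ? ?] := eq1 t tT; have [_ _ ? ?] := eq2 t tT; split.
Qed.

End SIRUniqueness.

Lemma small_horizon (R : realFieldType) (T K L : R) : 0 < T -> 0 <= K -> 0 <= L ->
  T < (4 * K + 8 * L + 1)^-1 -> 2 * K * T <= 1/2 /\ 4 * L * T <= 1/2.
Proof.
move=> T0 K0 L0; rewrite -[T]divr1 ltr_pdivrMr // ltr_pdivlMl ?mulr1; last lra.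
by move=> ?; split; nra.
Qed.

Theorem theorem4 (R : realType) (gamma b c u1max u2max i0 : R) (beta : R -> R) :
  0 < gamma -> 0 < b -> 0 < c -> 0 < u1max -> 0 < u2max ->
  0 <= i0 <= 1 ->
  measurable_fun setT beta ->
  (forall t, 0 <= beta t) ->
  (exists M : R, forall t, beta t <= M) ->
  exists T0 : R, 0 < T0 /\
    forall T : R, 0 < T -> T < T0 ->
    forall s1 r1 ls1 lr1 s2 r2 ls2 lr2 : R -> R,
      optimality_system gamma b c u1max u2max i0 beta T s1 r1 ls1 lr1 ->
      optimality_system gamma b c u1max u2max i0 beta T s2 r2 ls2 lr2 ->
      forall t, 0 <= t <= T ->
        [/\ s1 t = s2 t, r1 t = r2 t, ls1 t = ls2 t & lr1 t = lr2 t] /\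
        u1_char b u1max (ls1 t) (s1 t) = u1_char b u1max (ls2 t) (s2 t) /\
            u2_char c u2max (ls1 t) (s1 t) (r1 t)
              = u2_char c u2max (ls2 t) (s2 t) (r2 t).
Proof.
move=> _ _ _ /ltW u1max_ge0 /ltW u2max_ge0 _ _ beta_ge0 [M beta_le].
have beta_bnd t : 0 <= beta t <= M by rewrite beta_ge0 beta_le.
have M0 : 0 <= M := le_trans (beta_ge0 0) (beta_le 0).
have [L L0 hL] := exists_rhs_lipschitz gamma b c M u1max_ge0 u2max_ge0.
have K0 := adjoint_growth_ge0 gamma u1max_ge0 u2max_ge0 M0.
exists (4 * adjoint_growth gamma u1max u2max M + 8 * L + 1)^-1.
split=> [|T T0 TT0 s1 r1 ls1 lr1 s2 r2 ls2 lr2 o1 o2 t tT]; first by rewrite invr_gt0; lra.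
have [KT LT] := small_horizon T0 K0 L0 TT0.
by have [-> -> -> ->] :=
  optimality_system_unique u1max_ge0 u2max_ge0 beta_bnd T0 L0 hL KT LT o1 o2 tT.
Qed.
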